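(* The unrestricted black box complexity of the class of affine OneMax functions satisfies $B_{\mathcal{F}}=\Omega(n/\log n)$.
   Context: Identify $\{0,1\}$ with $\mathbb{F}_2$. $\ell(x)=\sum_{i=1}^n x_i$ (real sum). $\mathcal{F}$ is the set of functions $f(x)=\ell(Mx+b)$ on $\{0,1\}^n$ with $M\in\mathrm{GL}(n,\mathbb{F}_2)$, $b\in\mathbb{F}_2^n$ ($Mx+b$ over $\mathbb{F}_2$). For a class $\mathcal{C}$ of functions $\{0,1\}^n\to\mathbb{R}$, its (unrestricted) black box complexity is $B_{\mathcal{C}}=\inf_{A}\sup_{f\in\mathcal{C}}\mathbb{E}(T(A,f))$, where $A$ ranges over all randomized black-box search algorithms and $T(A,f)$ is the number of evaluations of $f$ made by $A$ until a global maximizer of $f$ is evaluated for the first time. *)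

From HB Require Import structures.
From mathcomp Require Import all_boot all_order all_algebra.
From mathcomp Require Import all_classical all_reals all_analysis.
Set Implicit Arguments. Unset Strict Implicit. Unset Printing Implicit Defensive.
Import Order.TTheory GRing.Theory Num.Theory.
Local Open Scope ring_scope.
Local Open Scope classical_set_scope.

(* Search points {0,1}^n = F_2^n, as column vectors. *)
Definition pt (n : nat) := 'cV['F_2]_n.

(* l(x) = sum_i x_i (the real sum of the 0/1 entries, here as a nat). *)
Definition ell (n : nat) (y : pt n) : nat := \sum_(i < n) ((y i ord0 != 0%R) : nat).

Definition affOneMax (n : nat) : set (pt n -> nat) :=
  [set f | exists (M : 'M['F_2]_n) (b : pt n),
      M \in unitmx /\ f = (fun x => ell (M *m x + b))].

Definition is_max (n : nat) (f : pt n -> nat) (x : pt n) : bool :=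
  [forall y, f y <= f x]%N.

(* A randomized (unrestricted) black-box algorithm: given the full history of
   (query, value) pairs, a probability distribution of the next query. *)
Definition history (n : nat) := seq (pt n * nat).
Definition algo (R : realType) (n : nat) := history n -> {ffun pt n -> R}.
Definition valid_algo (R : realType) (n : nat) (A : algo R n) : Prop :=
  forall h, (forall x, 0 <= A h x) /\ \sum_x A h x = 1.

(* Probability that, starting from history h, the next k queries of A on f
   all miss the set of global maximizers of f. *)
Fixpoint miss_prob (R : realType) (n : nat) (A : algo R n) (f : pt n -> nat)
  (k : nat) (h : history n) : R :=
  match k with
  | 0 => 1
  | k'.+1 => \sum_x A h x *
      (if is_max f x then 0 else miss_prob A f k' (rcons h (x, f x)))
  end.

(* E[T(A,f)] = sum_{k>=0} P(T > k), in the extended reals. *)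
Definition expected_time (R : realType) (n : nat) (A : algo R n)
  (f : pt n -> nat) : \bar R :=
  (\sum_(0 <= k <oo) (miss_prob A f k [::])%:E)%E.

Definition bbc (R : realType) (n : nat) (C : set (pt n -> nat)) : \bar R :=
  ereal_inf [set ereal_sup [set expected_time A f | f in C]
            | A in [set A : algo R n | valid_algo A]].

(* The class contains the 2^n functions  onemax_at z : x |-> #{i | x_i = z_i}
   (take M = 1 and b = z + 1), and onemax_at z has the unique maximizer z
   and takes its values in {0, ..., n}.  For any family of target functions
   in which every point maximizes at most one member and values lie in
   {0, ..., m}, an information-theoretic count holds: after k queries the
   algorithm's success probabilities, summed over the whole family, are at
   most (m + 2)^k, since each query either hits the unique target it
   maximizes or splits the family into m + 1 classes by the observed value
   ([hit_mass_le]).  Averaging over a family of size at least 2 (m + 2)^K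
   yields a member whose first K miss probabilities sum to at least K / 2
   ([exists_slow_target]), and this partial sum bounds the expected running
   time from below ([expected_time_ge_partial]).  Finally, for n >= 256 the
   budget K = floor (n / (16 ln n)) + 1 satisfies 2 (n + 2)^K <= 2^n
   ([query_budget]), which gives the bound with constant 1/32. *)
From HB Require Import structures.
From mathcomp Require Import all_boot all_order all_algebra.
From mathcomp Require Import all_classical all_reals all_analysis.
From mathcomp Require Import ring lra zify.
Import Order.TTheory GRing.Theory Num.Theory.
Set Implicit Arguments. Unset Strict Implicit. Unset Printing Implicit Defensive.
Local Open Scope ring_scope.

Section MissProbability.
Variables (R : realType) (n : nat) (A : algo R n).
Hypothesis A_valid : valid_algo A.

Lemma miss_prob_01 (f : pt n -> nat) k h : 0 <= miss_prob A f k h <= 1.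
Proof.
elim: k h => [|k IH] h /=; first by rewrite ler01 lexx.
have [A_ge0 A_sum1] := A_valid h.
have cont_01 x : 0 <= (if is_max f x then 0 else miss_prob A f k (rcons h (x, f x))) <= 1.
  by case: ifP => _; rewrite ?lexx ?ler01 ?IH.
apply/andP; split.
  by apply: sumr_ge0 => x _; rewrite mulr_ge0 //; case/andP: (cont_01 x).
rewrite -A_sum1; apply: ler_sum => x _.
by rewrite ler_piMr //; case/andP: (cont_01 x).
Qed.

Lemma hit_prob_succ (f : pt n -> nat) k h : 1 - miss_prob A f k.+1 h =
  \sum_x A h x * (if is_max f x then 1 else 1 - miss_prob A f k (rcons h (x, f x))).
Proof.
rewrite /= -{1}(A_valid h).2 -sumrB; apply: eq_bigr => x _.
by case: ifP => _; rewrite ?mulr0 ?subr0 ?mulr1 // mulrBr mulr1.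
Qed.

Lemma expected_time_ge_partial (f : pt n -> nat) K :
  ((\sum_(0 <= k < K) miss_prob A f k [::])%:E <= expected_time A f)%E.
Proof.
rewrite -sumEFin; apply: nneseries_lim_ge => k _ _.
by rewrite lee_fin; case/andP: (miss_prob_01 f k [::]).
Qed.

Variables (I : finType) (f : I -> pt n -> nat) (m : nat).
Hypothesis f_bounded : forall i x, (f i x <= m)%N.
Hypothesis max_unique : forall i j x, is_max (f i) x -> is_max (f j) x -> i = j.

Lemma max_count_le1 (P : pred I) x : \sum_(i | P i) (is_max (f i) x)%:R <= 1 :> R.
Proof.
rewrite (eq_bigr (fun i => if is_max (f i) x then 1 else 0)); last by move=> i _; case: ifP.
rewrite -big_mkcondr sumr_const lern1.
by apply/card_le1_eqP => i j /andP[_ Hi] /andP[_ Hj]; exact: max_unique Hj Hi.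
Qed.

Lemma hit_mass_le k h (P : pred I) :
  \sum_(i | P i) (1 - miss_prob A (f i) k h) <= (m.+2)%:R ^+ k.
Proof.
elim: k h P => [|k IH] h P; first by rewrite big1 ?ler01 // => i _; rewrite subrr.
set rest := fun i x => if ~~ is_max (f i) x
                       then 1 - miss_prob A (f i) k (rcons h (x, f i x)) else 0.
(* After observing the value v of the first query x, the remaining mass of the
   members with f i x = v is controlled by the induction hypothesis. *)
have rest_le x : \sum_(i | P i) rest i x <= m.+1%:R * (m.+2)%:R ^+ k.
  rewrite (partition_big (fun i => (inord (f i x) : 'I_m.+1)) xpredT) //=.
  apply: le_trans (_ : \sum_(v < m.+1) (m.+2)%:R ^+ k <= _).
    apply: ler_sum => v _.
    rewrite /rest -big_mkcondr /=.
    rewrite (eq_bigr (fun i => 1 - miss_prob A (f i) k (rcons h (x, v : nat)))).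
      exact: IH.
    by move=> i /andP[/andP[_ /eqP <-] _]; rewrite inordK // ltnS f_bounded.
  by rewrite sumr_const card_ord mulr_natl.
under eq_bigr => i _ do rewrite hit_prob_succ.
rewrite exchange_big /=.
apply: le_trans (_ : \sum_x A h x * (1 + m.+1%:R * (m.+2)%:R ^+ k) <= _).
  apply: ler_sum => x _; rewrite -mulr_sumr ler_wpM2l ?(A_valid h).1 //.
  rewrite (eq_bigr (fun i => (is_max (f i) x)%:R + rest i x)); last first.
    by move=> i _; rewrite /rest; case: ifP; rewrite ?addr0 ?add0r.
  by rewrite big_split lerD ?max_count_le1 ?rest_le.
rewrite -mulr_suml (A_valid h).2 mul1r exprS.
have g_ge1 : 1 <= (m.+2)%:R ^+ k :> R by rewrite exprn_ege1 // ler1n.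
move: g_ge1; set g := _ ^+ k; rewrite -[m.+2%:R]natr1; lra.
Qed.

Lemma exists_slow_target K : 2 * (m.+2)%:R ^+ K <= #|I|%:R :> R ->
  exists i, K%:R / 2 <= \sum_(0 <= k < K) miss_prob A (f i) k [::].
Proof.
move=> big_family; apply/not_existsP => all_fast.
have fast i : \sum_(0 <= k < K) miss_prob A (f i) k [::] < K%:R / 2.
  by rewrite ltNge; apply/negP => /(all_fast i).
have card_I_gt0 : (0 < #|I|)%N.
  rewrite -(ltr0n R); apply: lt_le_trans big_family.
  by rewrite mulr_gt0 ?exprn_gt0.
have /card_gt0P [i0 _] := card_I_gt0.
have upper : \sum_i \sum_(0 <= k < K) miss_prob A (f i) k [::] < #|I|%:R * (K%:R / 2).
  apply: (lt_le_trans (ltr_sum _ (fun i _ => fast i))).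
    by apply/hasP; exists i0; rewrite ?mem_index_enum.
  by rewrite sumr_const eq_cardT // -cardT -[_ *+ #|I|]mulr_natl.
have lower : #|I|%:R * (K%:R / 2) <= \sum_i \sum_(0 <= k < K) miss_prob A (f i) k [::].
  rewrite exchange_big /=.
  apply: le_trans (_ : \sum_(0 <= k < K) (#|I|%:R / 2 : R) <= _).
    by rewrite sumr_const_nat subn0 -mulr_natl; lra.
  apply: ler_sum_nat => k /andP[_ k_lt_K].
  have := hit_mass_le k [::] xpredT.
  rewrite sumrB sumr_const eq_cardT // -cardT -[_ *+ #|I|]mulr_natr mul1r.
  have : (m.+2)%:R ^+ k <= (m.+2)%:R ^+ K :> R.
    by rewrite ler_weXn2l ?ler1n // ltnW.
  lra.
lra.
Qed.

End MissProbability.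

Lemma F2_add_add1_neq0 (a b : 'F_2) : (a + b + 1 != 0) = (a == b).
Proof. by move: a b; do 2 case=> [[|[|//]]] ?. Qed.

Definition onemax_at (n : nat) (z x : pt n) : nat :=
  \sum_(i < n) (x i ord0 == z i ord0 : nat).

Lemma onemax_at_affine n (z : pt n) : affOneMax (onemax_at z).
Proof.
exists 1%:M, (z + const_mx 1); split; first exact: unitmx1.
apply: funext => x; rewrite /ell mul1mx; apply: eq_bigr => i _.
by rewrite !mxE addrA F2_add_add1_neq0.
Qed.

Lemma onemax_at_le n (z x : pt n) : (onemax_at z x <= n)%N.
Proof.
rewrite -[n in (_ <= n)%N]card_ord -sum1_card.
by apply: leq_sum => i _; case: (_ == _).
Qed.

Lemma onemax_at_self n (z : pt n) : onemax_at z z = n.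
Proof.
rewrite -[RHS]card_ord -sum1_card; apply: eq_bigr => i _; by rewrite eqxx.
Qed.

Lemma onemax_at_lt n (z x : pt n) : x != z -> (onemax_at z x < n)%N.
Proof.
move=> x_neq_z.
have [i x_neq_z_at_i] : exists i, x i ord0 != z i ord0.
  apply/not_existsP => agree; move/eqP: x_neq_z; apply.
  apply/matrixP => i j; rewrite (ord1 j); apply/eqP.
  by apply/negP => /negP; apply: agree.
rewrite /onemax_at (bigD1 i) //= (negbTE x_neq_z_at_i) add0n.
apply: (@leq_trans (\sum_(j < n | j != i) 1).+1).
  by rewrite ltnS; apply: leq_sum => j _; case: (_ == _).
by rewrite sum1_card cardC1 card_ord; case: n {x z x_neq_z x_neq_z_at_i} i => [[]|].
Qed.

Lemma onemax_at_max n (z x : pt n) : is_max (onemax_at z) x -> x = z.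
Proof.
move=> /forallP/(_ z); rewrite onemax_at_self => z_le_x.
by apply/eqP; apply/contraTT: z_le_x => /onemax_at_lt; rewrite -ltnNge.
Qed.

Lemma onemax_at_max_unique n (z z' x : pt n) :
  is_max (onemax_at z) x -> is_max (onemax_at z') x -> z = z'.
Proof. by move=> /onemax_at_max <- /onemax_at_max. Qed.

(* ln 2 >= 1/2, since exp (1/2) <= 1 / (1 - 1/2) = 2. *)
Lemma ln2_ge_half (R : realType) : 1 / 2 <= ln (2 : R).
Proof.
have exp_half_le2 : expR (1 / 2 : R) <= 2.
  have := expR_ge1Dx (- (1 / 2) : R); rewrite expRN.
  have := expR_gt0 (1 / 2 : R); set e := expR _ => e_gt0 inv_ge.
  have : e * (1 / 2) <= e * e^-1 by rewrite ler_wpM2l //; lra.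
  by rewrite mulfV ?gt_eqF //; lra.
by rewrite -[X in X <= _](expRK (1 / 2 : R)) ler_ln ?posrE.
Qed.

(* ln x <= 2 sqrt x, from ln y < y applied to y = sqrt x. *)
Lemma ln_le_2sqrt (R : realType) (x : R) : 0 < x -> ln x <= 2 * Num.sqrt x.
Proof.
move=> x_gt0; have s_gt0 : 0 < Num.sqrt x by rewrite sqrtr_gt0.
rewrite -{1}(sqr_sqrtr (ltW x_gt0)) lnXn // mulr2n.
have := ln_sublinear s_gt0; lra.
Qed.

Lemma log_slack (R : realType) (x : R) : 256 <= x -> x / 8 + 2 * ln x + ln 2 <= x * ln 2.
Proof.
move=> x_ge.
have := ln_le_2sqrt (lt_le_trans (ltr0n R 256) x_ge).
have := ln2_ge_half R; have := sqrtr_ge0 x.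
have := sqr_sqrtr (le_trans (ler0n R 256) x_ge); rewrite expr2.
set s := Num.sqrt x; set l2 := ln 2 => s2 s_ge0 l2_ge ln_le.
have s_ge16 : 16 <= s by nra.
have : (x - 1) * (1 / 2) <= (x - 1) * l2 by rewrite ler_wpM2l //; lra.
nra.
Qed.

(* ln (n + 2) <= 2 ln n, since n + 2 <= n^2 for n >= 2. *)
Lemma ln_add2_le (R : realType) n : (2 <= n)%N -> ln (n.+2%:R : R) <= 2 * ln n%:R.
Proof.
move=> n_ge2; have n_gt0 : 0 < n%:R :> R by rewrite ltr0n; lia.
rewrite [2 * _]mulr_natl -lnXn // ler_ln ?posrE ?exprn_gt0 //.
by rewrite -natrX ler_nat expnS expn1; clear n_gt0; nia.
Qed.

Lemma pow_le_of_ln (R : realType) (b : R) (K n : nat) : 0 < b ->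
  ln 2 + K%:R * ln b <= n%:R * ln 2 -> 2 * b ^+ K <= 2 ^+ n.
Proof.
move=> b_gt0 ln_le.
rewrite -ler_ln ?posrE ?mulr_gt0 ?exprn_gt0 // lnM ?posrE ?exprn_gt0 //.
by rewrite !lnXn // -[ln b *+ K]mulr_natl -[ln 2 *+ n]mulr_natl.
Qed.

Lemma query_budget (R : realType) n : (256 <= n)%N ->
  exists K : nat, n%:R / (16 * ln n%:R) <= K%:R :> R /\ 2 * n.+2%:R ^+ K <= 2 ^+ n :> R.
Proof.
move=> n_ge; have nR_ge : 256 <= n%:R :> R by rewrite (ler_nat R 256 n).
set L := ln (n%:R : R); have L_gt0 : 0 < L by apply: ln_gt0; lra.
set t := n%:R / (16 * L).
have tL : t * L = n%:R / 16 by rewrite /t; field; lra.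
have t_ge0 : 0 <= t by rewrite divr_ge0 //; lra.
exists (Num.truncn t).+1; split; first by apply/ltW/real_truncnS_gt; rewrite ger0_real.
apply: pow_le_of_ln; first by rewrite ltr0n.
have K_le : (Num.truncn t).+1%:R <= t + 1 by rewrite -natr1 lerD2r truncn_le.
have ln_le : ln (n.+2%:R : R) <= 2 * L by apply: ln_add2_le; apply: leq_trans n_ge.
have ln_ge0 : 0 <= ln (n.+2%:R : R) by apply: ln_ge0; rewrite ler1n.
have budget : (Num.truncn t).+1%:R * ln (n.+2%:R : R) <= n%:R / 8 + 2 * L.
  apply: le_trans (ler_wpM2r ln_ge0 K_le) _.
  apply: le_trans (ler_wpM2l _ ln_le) _; first lra.
  lra.
have := log_slack nR_ge; rewrite -/L; lra.
Qed.

Local Open Scope classical_set_scope.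

Theorem theorem3 (R : realType) :
  exists c : R, 0 < c /\ exists N : nat, forall n : nat, (N <= n)%N ->
    ((c * n%:R / ln (n%:R : R))%:E <= bbc R (@affOneMax n))%E.
Proof.
exists (1 / 32); split; first lra.
exists 256%N => n n_ge.
have [K [K_ge pow_le]] := query_budget R n_ge.
apply: le_ereal_inf_tmp => _ [A A_valid <-].
(* Restrict to the 2^n targets onemax_at z, z in F_2^n. *)
have many_targets : 2 * n.+2%:R ^+ K <= #|{: pt n}|%:R :> R.
  by rewrite card_mx card_Fp // muln1 natrX.
have [z slow_z] := exists_slow_target A_valid (@onemax_at_le n) (@onemax_at_max_unique n)
  many_targets.
have z_in_class : [set expected_time A f | f in @affOneMax n] (expected_time A (onemax_at z)).
  by exists (onemax_at z); first exact: onemax_at_affine.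
apply: le_trans (ereal_sup_ubound z_in_class).
apply: le_trans (expected_time_ge_partial A_valid _ K).
rewrite lee_fin; apply: le_trans slow_z.
have -> : 1 / 32 * n%:R / ln (n%:R : R) = n%:R / (16 * ln n%:R) / 2 by rewrite invfM; lra.
lra.
Qed.
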